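(* For every finite simple graph $G$, $\operatorname{box}(G) \le \operatorname{tw}(G) + 2$.
   Context: An axis-parallel $b$-dimensional box is a Cartesian product $R_1\times\cdots\times R_b$ of closed real intervals $R_i=[a_i,b_i]$. The boxicity $\operatorname{box}(G)$ of a graph $G$ is the minimum $b$ such that $G$ is the intersection graph of a family of axis-parallel $b$-dimensional boxes (one box per vertex, two distinct vertices adjacent iff their boxes intersect). A tree decomposition of $G=(V,E)$ is a pair $(\{X_i : i\in I\},T)$ with $T$ a tree on node set $I$ and $X_i\subseteq V$, such that $\bigcup_i X_i=V$, every edge has both endpoints in some $X_i$, and whenever $j$ lies on the path in $T$ from $i$ to $k$ we have $X_i\cap X_k\subseteq X_j$. Its width is $\max_i |X_i|-1$, and the treewidth $\operatorname{tw}(G)$ is the minimum width of a tree decomposition of $G$. *)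

From mathcomp Require Import all_boot all_order all_algebra.
From Stdlib Require Rdefinitions.
Set Implicit Arguments. Unset Strict Implicit. Unset Printing Implicit Defensive.

Definition simple_graph (T : finType) (e : rel T) : Prop :=
  symmetric e /\ irreflexive e.

Definition box_rep (T : finType) (e : rel T) (b : nat) : Prop :=
  exists (lo hi : T -> 'I_b -> Rdefinitions.R),
    (forall v i, Rdefinitions.Rle (lo v i) (hi v i)) /\
    (forall u v, u <> v ->
       (e u v <-> forall i, Rdefinitions.Rle (lo u i) (hi v i) /\ Rdefinitions.Rle (lo v i) (hi u i))).

Definition is_boxicity (T : finType) (e : rel T) (k : nat) : Prop :=
  box_rep e k /\ forall b, box_rep e b -> (k <= b)%N.

Definition acyclic (I : finType) (t : rel I) : Prop :=
  forall (x : I) (p : seq I),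
    (2 <= size p)%N -> uniq (x :: p) -> path t x p -> ~~ t (last x p) x.

Definition is_tree (I : finType) (t : rel I) : Prop :=
  (0 < #|I|)%N /\ symmetric t /\ irreflexive t /\
  (forall i j : I, connect t i j) /\ acyclic t.

Definition on_tree_path (I : finType) (t : rel I) (i j k : I) : Prop :=
  exists p : seq I, [/\ path t i p, last i p = k, uniq (i :: p) & j \in i :: p].

Definition tree_decomposition (T : finType) (e : rel T)
    (I : finType) (t : rel I) (X : I -> {set T}) : Prop :=
  [/\ is_tree t,
      (forall v : T, exists i, v \in X i),
      (forall u v : T, e u v -> exists i, (u \in X i) && (v \in X i))
    & (forall i j k : I, on_tree_path t i j k -> X i :&: X k \subset X j)].

Definition td_width (T : finType) (I : finType) (X : I -> {set T}) : int :=
  (Posz (\max_(i : I) #|X i|) - 1)%R.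

Definition is_treewidth (T : finType) (e : rel T) (k : int) : Prop :=
  (exists (I : finType) (t : rel I) (X : I -> {set T}),
      tree_decomposition e t X /\ td_width X = k) /\
  (forall (I : finType) (t : rel I) (X : I -> {set T}),
      tree_decomposition e t X -> (k <= td_width X)%R).

(* Root a tree decomposition whose bags have at most k = tw + 1 vertices and
   give every tree node an interval of the line, nested along the tree: the
   intervals of the children of a node are pairwise disjoint and lie in the
   right half of the interval of the node.  A vertex v occupies a subtree of
   bags, with a highest bag b(v); the first coordinate of v is the interval of
   b(v), which already separates vertices whose highest bags are incomparable.
   Colour the vertices with k colours so that the vertices of every bag get
   distinct colours (greedily, deepest highest bag last).  In the coordinate of
   colour j, a vertex of colour j is the left end of the interval of its highest
   bag, and any other vertex v covers the right half of the interval of b(v),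
   stretched leftwards to the point of its colour-j neighbour in b(v) if there
   is one.  If b(u) is an ancestor of b(v) and uv is not an edge, the
   coordinate of the colour of u separates u from v; so k + 1 = tw + 2
   coordinates suffice. *)

From Stdlib Require Import Reals Lra Classical Wf_nat.
From mathcomp Require Import all_boot all_order all_algebra.
From mathcomp Require Import zify.
Set Implicit Arguments. Unset Strict Implicit. Unset Printing Implicit Defensive.

Lemma belast_traject (T : Type) (f : T -> T) x n :
  belast x (traject f (f x) n) = traject f x n.
Proof. by elim: n x => //= n IHn x; rewrite IHn. Qed.

Lemma last_rev_traject (T : Type) (f : T -> T) x n :
  last (iter n f x) (rev (traject f x n)) = x.
Proof. by case: n => //= n; rewrite rev_cons last_rcons. Qed.

Section RootedTree.
Variables (I : finType) (t : rel I) (r : I).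
Hypotheses (t_sym : symmetric t) (t_conn : forall x, connect t r x).

Definition walk_of_size x n := [exists p : n.-tuple I, path t r p && (last r p == x)].

Lemma exists_walk_of_size x : exists n, walk_of_size x n.
Proof.
have /connectP [p p_path ->] := t_conn x.
by exists (size p); apply/existsP; exists (in_tuple p); rewrite /= p_path eqxx.
Qed.

Definition depth x := ex_minn (exists_walk_of_size x).

Lemma depthP x : walk_of_size x (depth x).
Proof. by rewrite /depth; case: ex_minnP. Qed.

Lemma depth_min x n : walk_of_size x n -> depth x <= n.
Proof. by rewrite /depth; case: ex_minnP => m _; apply. Qed.

Lemma depth_root : depth r = 0.
Proof.
apply/eqP; rewrite -leqn0; apply: depth_min; apply/existsP.
by exists (in_tuple [::]); rewrite /= eqxx.
Qed.

Lemma depth_eq0 x : depth x = 0 -> x = r.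
Proof.
move=> dx0; have := depthP x; rewrite dx0 => /existsP [p /andP [_ /eqP <-]].
by rewrite tuple0.
Qed.

Lemma depth_edge x y : t x y -> depth y <= (depth x).+1.
Proof.
move=> txy; apply: depth_min; have /existsP [p /andP [p_path /eqP p_last]] := depthP x.
apply/existsP; exists (Tuple (rcons_tupleP p y)).
by rewrite /= rcons_path p_path p_last txy last_rcons eqxx.
Qed.

Lemma exists_lower_neighbour x :
  0 < depth x -> exists y, t y x && (depth y < depth x).
Proof.
move=> dx_gt0; have /existsP [[p size_p] /andP [/= p_path /eqP p_last]] := depthP x.
case/lastP: p size_p p_path p_last => [/eqP dx0|q z]; first by rewrite -dx0 in dx_gt0.
rewrite size_rcons rcons_path last_rcons => /eqP size_q /andP [q_path t_last] z_x.
subst z; exists (last r q); rewrite t_last -size_q ltnS; apply: depth_min.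
by apply/existsP; exists (in_tuple q); rewrite /= q_path eqxx.
Qed.

Definition parent x := odflt x [pick y | t y x & depth y < depth x].

Lemma parent_spec x : 0 < depth x -> t (parent x) x /\ depth (parent x) = (depth x).-1.
Proof.
move=> dx_gt0; rewrite /parent; case: pickP => [y /andP [tyx dy] | none] /=.
  by have := depth_edge tyx; split=> //; lia.
by have [y] := exists_lower_neighbour dx_gt0; rewrite none.
Qed.

Lemma parent_edge x : 0 < depth x -> t (parent x) x.
Proof. by case/parent_spec. Qed.

Lemma parent_root x : depth x = 0 -> parent x = x.
Proof. by move=> dx0; rewrite /parent; case: pickP => [y /andP [_]|]; rewrite ?dx0. Qed.

Lemma depth_parent x : depth (parent x) = (depth x).-1.
Proof.
have [dx0|dx_gt0] := posnP (depth x); first by rewrite parent_root // dx0.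
by case: (parent_spec dx_gt0).
Qed.

Lemma depth_iter_parent n x : depth (iter n parent x) = depth x - n.
Proof. by elim: n => [|n IHn] /=; rewrite ?subn0 // depth_parent IHn subnS. Qed.

Lemma iter_parent_root n x : depth x <= n -> iter n parent x = r.
Proof.
move=> dx_le_n; rewrite -(subnK dx_le_n) iterD.
have root_x : iter (depth x) parent x = r by apply: depth_eq0; rewrite depth_iter_parent subnn.
by rewrite root_x iter_fix // parent_root // depth_root.
Qed.

Definition ancestor y x :=
  (depth y <= depth x) && (iter (depth x - depth y) parent x == y).

Lemma ancestorP y x : reflect (exists n, iter n parent x = y) (ancestor y x).
Proof.
apply: (iffP andP) => [[_ /eqP <-]|[n <-]]; first by eexists.
rewrite depth_iter_parent leq_subr; split=> //.
have [n_le_dx|dx_lt_n] := leqP n (depth x); first by rewrite subKn.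
have -> : depth x - n = 0 by lia.
by rewrite subn0 !iter_parent_root // ltnW.
Qed.

Lemma ancestor_refl x : ancestor x x.
Proof. by apply/ancestorP; exists 0. Qed.

Lemma ancestor_trans x y z : ancestor x y -> ancestor y z -> ancestor x z.
Proof.
by move=> /ancestorP [n <-] /ancestorP [m <-]; apply/ancestorP; exists (n + m); rewrite iterD.
Qed.

Lemma root_ancestor x : ancestor r x.
Proof. by apply/ancestorP; exists (depth x); rewrite iter_parent_root. Qed.

Lemma ancestor_depth y x : ancestor y x -> depth y <= depth x.
Proof. by case/andP. Qed.

Lemma ancestor_depth_eq y x : ancestor y x -> depth x <= depth y -> y = x.
Proof.
move=> /andP [dyx /eqP iter_y] dxy.
by rewrite -iter_y (_ : depth x - depth y = 0) //; lia.
Qed.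

Lemma ancestor_of_depth_le y z x :
  ancestor y x -> ancestor z x -> depth y <= depth z -> ancestor y z.
Proof.
move=> /andP [_ /eqP iter_y] /andP [dzx /eqP iter_z] dyz; apply/andP; split=> //.
apply/eqP; rewrite -[in RHS]iter_y -[in X in iter _ _ X]iter_z -iterD.
by congr iter; lia.
Qed.

Lemma ancestor_total y z x : ancestor y x -> ancestor z x -> ancestor y z || ancestor z y.
Proof.
move=> yx zx; have [dyz|dzy] := leqP (depth y) (depth z).
  by rewrite (ancestor_of_depth_le yx zx dyz).
by rewrite (ancestor_of_depth_le zx yx (ltnW dzy)) orbT.
Qed.

Lemma not_ancestor_proper y z x : ancestor y x -> ancestor z x -> ~~ ancestor y z ->
  ancestor z y /\ z != y.
Proof.
move=> yx zx not_yz; split; first by move: (ancestor_total yx zx); rewrite (negbTE not_yz).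
by apply: contraNneq not_yz => ->; exact: ancestor_refl.
Qed.

Lemma ancestor_child w x : ancestor w x -> w != x ->
  exists c, [/\ ancestor c x, 0 < depth c & parent c = w].
Proof.
move=> /andP [dwx /eqP iter_w] wx; have dw_lt_dx : depth w < depth x.
  by rewrite ltn_neqAle dwx andbT; apply: contra wx => /eqP dxw; rewrite -iter_w dxw subnn.
exists (iter (depth x - depth w).-1 parent x); split.
- by apply/ancestorP; eexists.
- by rewrite depth_iter_parent; lia.
- by rewrite -iterS prednK ?subn_gt0.
Qed.

Definition lca x y := [arg max_(w > r | ancestor w x && ancestor w y) depth w].

Lemma lcaP x y : [/\ ancestor (lca x y) x, ancestor (lca x y) y &
  forall w, ancestor w x -> ancestor w y -> depth w <= depth (lca x y)].
Proof.
rewrite /lca; case: arg_maxnP; first by rewrite !root_ancestor.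
by move=> w /andP [wx wy] w_max; split=> // w' w'x w'y; apply: w_max; rewrite w'x.
Qed.

Lemma path_traject_parent x n : n <= depth x -> path t x (traject parent (parent x) n).
Proof.
elim: n x => [|n IHn] x dx //=.
by rewrite t_sym parent_edge ?IHn ?depth_parent //; lia.
Qed.

Lemma uniq_traject_parent x n : n <= (depth x).+1 -> uniq (traject parent x n).
Proof.
elim: n x => [|n IHn] x dx //; rewrite trajectS /= IHn ?depth_parent ?andbT; last by lia.
apply/trajectP => -[i i_lt x_eq]; move: (congr1 depth x_eq).
by rewrite -iterSr depth_iter_parent; lia.
Qed.

Lemma on_tree_path_ancestors x y z :
  ancestor y x -> ancestor z y -> on_tree_path t x y z.
Proof.
move=> yx zy; have /andP [dzx /eqP iter_z] := ancestor_trans zy yx.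
have /andP [dyx /eqP iter_y] := yx; have dzy := ancestor_depth zy.
exists (traject parent (parent x) (depth x - depth z)); split.
- by apply: path_traject_parent; rewrite leq_subr.
- by rewrite last_traject.
- by rewrite -trajectS uniq_traject_parent //; lia.
- by rewrite -trajectS; apply/trajectP; exists (depth x - depth y); rewrite ?iter_y //; lia.
Qed.

Lemma on_tree_path_parent z x : ~~ ancestor z x -> on_tree_path t z (parent z) x.
Proof.
move=> zx; have [wz wx w_max] := lcaP z x; set w := lca z x in wz wx w_max *.
have /andP [dwz /eqP iter_wz] := wz; have /andP [dwx /eqP iter_wx] := wx.
have dw_lt_dz : depth w < depth z.
  rewrite ltn_neqAle dwz andbT; apply: contra zx => /eqP dwz'.
  by rewrite -(ancestor_depth_eq wz) ?dwz'.
have flip_t : (fun a b => t b a) =2 t by move=> a b; rewrite t_sym.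
exists (traject parent (parent z) (depth z - depth w) ++
        rev (traject parent x (depth x - depth w))).
rewrite -cat_cons -trajectS; split.
- rewrite cat_path path_traject_parent ?leq_subr //= last_traject iter_wz -{1}iter_wx.
  rewrite -(belast_traject parent x) -(last_traject parent x) rev_path.
  by rewrite (eq_path flip_t) path_traject_parent ?leq_subr.
- by rewrite last_cat last_traject iter_wz -{1}iter_wx last_rev_traject.
- rewrite cat_uniq rev_uniq !uniq_traject_parent ?andbT; try lia.
  apply/hasPn => a; rewrite mem_rev => /trajectP [i i_lt ->].
  apply/trajectP => -[j j_lt ij].
  have common_x : ancestor (iter i parent x) x by apply/ancestorP; exists i.
  have common_z : ancestor (iter i parent x) z by apply/ancestorP; exists j.
  by have := w_max _ common_z common_x; rewrite depth_iter_parent; lia.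
- by rewrite mem_cat; apply/orP; left; apply/trajectP; exists 1 => //; lia.
Qed.

Section Layout.
Local Open Scope R_scope.

Definition rank_of (x : I) := INR (enum_rank x).

(* The children of a node with interval [l, h] get the slots
   [(l + h) / 2 + 2 c s, (l + h) / 2 + (2 c + 1) s], where s = (h - l) / (4 |I|)
   and c is the rank of the child in the enumeration of I: slots of siblings are
   separated by gaps and all lie in the right half of [l, h]. *)
Fixpoint layout n x : R * R :=
  if n is n'.+1 then
    let p := layout n' (parent x) in
    let s := (p.2 - p.1) / (4 * INR #|I|) in
    ((p.1 + p.2) / 2 + s * (2 * rank_of x), (p.1 + p.2) / 2 + s * (2 * rank_of x + 1))
  else (0, 1).

Definition node_lo x := (layout (depth x) x).1.
Definition node_hi x := (layout (depth x) x).2.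
Definition node_mid x := (node_lo x + node_hi x) / 2.
Definition node_slot x := (node_hi x - node_lo x) / (4 * INR #|I|).

Lemma node_child x : (0 < depth x)%N ->
  node_lo x = node_mid (parent x) + node_slot (parent x) * (2 * rank_of x) /\
  node_hi x = node_mid (parent x) + node_slot (parent x) * (2 * rank_of x + 1).
Proof.
rewrite /node_mid /node_slot /node_lo /node_hi depth_parent.
by case: (depth x) => //= n _; split.
Qed.

Lemma rank_of_bounds x : 0 <= rank_of x /\ rank_of x + 1 <= INR #|I|.
Proof.
split; first exact: pos_INR.
by rewrite /rank_of -S_INR; apply: le_INR; apply/leP; exact: ltn_ord.
Qed.

Lemma card_INR_gt0 : 0 < INR #|I|.
Proof. by have [] := rank_of_bounds r; lra. Qed.

Lemma node_lo_lt_hi x : node_lo x < node_hi x.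
Proof.
have [n] := ubnP (depth x); elim: n x => // n IHn x dx_lt.
have [dx0|dx_gt0] := posnP (depth x).
  by rewrite /node_lo /node_hi dx0 /=; lra.
have [-> ->] := node_child dx_gt0.
have lo_hi : node_lo (parent x) < node_hi (parent x) by apply: IHn; rewrite depth_parent; lia.
have slot_gt0 : 0 < node_slot (parent x).
  by apply: Rdiv_lt_0_compat; have := card_INR_gt0; lra.
lra.
Qed.

Lemma node_mid_bounds x : node_lo x < node_mid x /\ node_mid x < node_hi x.
Proof. by have := node_lo_lt_hi x; rewrite /node_mid; lra. Qed.

Lemma slot_within (a b N c : R) : a < b -> 0 <= c -> c + 1 <= N ->
  0 <= (b - a) / (4 * N) * (2 * c) /\ (b - a) / (4 * N) * (2 * c + 1) <= (b - a) / 2.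
Proof.
move=> ab c_ge0 cN; have slot_gt0 : 0 < (b - a) / (4 * N) by apply: Rdiv_lt_0_compat; lra.
have -> : (b - a) / 2 = (b - a) / (4 * N) * (2 * N) by field; lra.
by split; [apply: Rmult_le_pos | apply: Rmult_le_compat_l]; lra.
Qed.

Lemma node_child_sub x : (0 < depth x)%N ->
  node_mid (parent x) <= node_lo x /\ node_hi x <= node_hi (parent x).
Proof.
move=> dx_gt0; have [-> ->] := node_child dx_gt0; have [rank_ge0 rank_lt] := rank_of_bounds x.
have := slot_within (node_lo_lt_hi (parent x)) rank_ge0 rank_lt.
by rewrite /node_mid /node_slot; lra.
Qed.

Lemma node_sibling_lt x y : (0 < depth x)%N -> (0 < depth y)%N ->
  parent x = parent y -> (enum_rank x < enum_rank y)%N -> node_hi x < node_lo y.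
Proof.
move=> dx_gt0 dy_gt0 pxy rank_xy.
have [_ ->] := node_child dx_gt0; have [-> _] := node_child dy_gt0; rewrite pxy.
have rank_le : rank_of x + 1 <= rank_of y.
  by rewrite /rank_of -S_INR; apply: le_INR; apply/leP.
have slot_gt0 : 0 < node_slot (parent y).
  by apply: Rdiv_lt_0_compat; have := card_INR_gt0; have := node_lo_lt_hi (parent y); lra.
nra.
Qed.

Lemma node_ancestor_sub y x : ancestor y x ->
  node_lo y <= node_lo x /\ node_hi x <= node_hi y.
Proof.
move=> /ancestorP [n <-]; elim: n => [|n IHn] /=; first by lra.
set z := iter n parent x in IHn *.
have [dz0|dz_gt0] := posnP (depth z); first by rewrite parent_root.
have := node_child_sub dz_gt0; have := node_mid_bounds (parent z); lra.
Qed.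

Lemma node_mid_le_lo y x : ancestor y x -> y != x -> node_mid y <= node_lo x.
Proof.
move=> yx neq_yx; have [c [cx dc_gt0 <-]] := ancestor_child yx neq_yx.
have [mid_lo _] := node_child_sub dc_gt0; have [lo_lo _] := node_ancestor_sub cx.
lra.
Qed.

Lemma node_ancestor_mid y x : ancestor y x ->
  node_mid y < node_hi x /\ node_mid x < node_hi y.
Proof.
move=> yx; have [hi_hi] := node_ancestor_sub yx; have := node_mid_bounds x.
have := node_mid_bounds y; have := node_lo_lt_hi x.
have [<-|neq_yx] := eqVneq y x; first by lra.
by have := node_mid_le_lo yx neq_yx; lra.
Qed.

Lemma node_incomparable_disjoint x y : ~~ ancestor x y -> ~~ ancestor y x ->
  node_hi x < node_lo y \/ node_hi y < node_lo x.
Proof.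
move=> xy yx; have [wx wy w_max] := lcaP x y; set w := lca x y in wx wy w_max.
have [cx [cxx dcx_gt0 pcx]] : exists c, [/\ ancestor c x, (0 < depth c)%N & parent c = w].
  by apply: ancestor_child => //; apply: contraNneq xy => <-.
have [cy [cyy dcy_gt0 pcy]] : exists c, [/\ ancestor c y, (0 < depth c)%N & parent c = w].
  by apply: ancestor_child => //; apply: contraNneq yx => <-.
have pxy : parent cx = parent cy by rewrite pcx pcy.
have neq_c : cx != cy.
  apply/eqP => eq_c; have := w_max cx cxx; rewrite eq_c => /(_ cyy).
  by rewrite -pcy depth_parent; lia.
have := node_ancestor_sub cxx; have := node_ancestor_sub cyy.
have := node_lo_lt_hi x; have := node_lo_lt_hi y.
have [rank_lt|rank_gt|/val_inj/enum_rank_inj eq_c] := ltngtP (enum_rank cx) (enum_rank cy).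
- by have := node_sibling_lt dcx_gt0 dcy_gt0 pxy rank_lt; lra.
- by have := node_sibling_lt dcy_gt0 dcx_gt0 (esym pxy) rank_gt; lra.
- by rewrite eq_c eqxx in neq_c.
Qed.

End Layout.

Section TreeDecomposition.
Variables (T : finType) (e : rel T) (X : I -> {set T}).
Hypotheses (X_cover : forall v, exists i, v \in X i)
  (X_path : forall i j k, on_tree_path t i j k -> X i :&: X k \subset X j).

Definition top_bag v := [arg min_(i < odflt r [pick i | v \in X i] | v \in X i) depth i].

Lemma top_bagP v : v \in X (top_bag v) /\ forall i, v \in X i -> depth (top_bag v) <= depth i.
Proof.
have [i vi] := X_cover v; rewrite /top_bag; case: pickP => [j vj | none] /=.
  by case: arg_minnP => // m vm m_min; split=> // i' /m_min.
by rewrite none in vi.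
Qed.

Lemma mem_top_bag v : v \in X (top_bag v).
Proof. by case: (top_bagP v). Qed.

Lemma top_bag_min v i : v \in X i -> depth (top_bag v) <= depth i.
Proof. by case: (top_bagP v) => _; apply. Qed.

Lemma mem_bag_on_path i j k v : on_tree_path t i j k -> v \in X i -> v \in X k -> v \in X j.
Proof. by move=> /X_path /subsetP sub vi vk; apply: sub; rewrite inE vi. Qed.

Lemma top_bag_ancestor v i : v \in X i -> ancestor (top_bag v) i.
Proof.
move=> vi; apply/idPn => not_anc.
have /top_bag_min := mem_bag_on_path (on_tree_path_parent not_anc) (mem_top_bag v) vi.
rewrite depth_parent; have [/depth_eq0 top_r|] := posnP (depth (top_bag v)); last by lia.
by rewrite top_r root_ancestor in not_anc.
Qed.

Lemma mem_bag_ancestor v i y :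
  v \in X i -> ancestor y i -> ancestor (top_bag v) y -> v \in X y.
Proof.
by move=> vi yi vy; apply: mem_bag_on_path (on_tree_path_ancestors yi vy) vi (mem_top_bag v).
Qed.

Lemma top_bags_comparable u v i : u \in X i -> v \in X i ->
  ancestor (top_bag u) (top_bag v) || ancestor (top_bag v) (top_bag u).
Proof. by move=> ui vi; apply: ancestor_total (top_bag_ancestor ui) (top_bag_ancestor vi). Qed.

Lemma mem_top_bag_of_depth_le u w i : u \in X i -> w \in X i ->
  depth (top_bag u) <= depth (top_bag w) -> u \in X (top_bag w).
Proof.
move=> ui wi d_uw; apply: (mem_bag_ancestor ui (top_bag_ancestor wi)).
exact: ancestor_of_depth_le (top_bag_ancestor ui) (top_bag_ancestor wi) d_uw.
Qed.

Lemma exists_bag_colouring_on k (S : {set T}) : 0 < k -> (forall i, #|X i| <= k) ->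
  exists col : T -> 'I_k,
    {in S &, forall u w i, u != w -> u \in X i -> w \in X i -> col u != col w}.
Proof.
move=> k_gt0 X_small; have [n] := ubnP #|S|; elim: n S => // n IHn S S_lt.
have [-> | [v0 v0S]] := set_0Vmem S.
  by exists (fun=> Ordinal k_gt0) => u w; rewrite inE.
have [v /= vS v_max] := @arg_maxnP _ v0 (fun x => x \in S) (fun x => depth (top_bag x)) v0S.
have [c c_ok] : exists c : T -> 'I_k,
    {in S :\ v &, forall u w i, u != w -> u \in X i -> w \in X i -> c u != c w}.
  by apply: IHn; move: S_lt; rewrite (cardsD1 v S) vS add1n ltnS.
(* As top_bag v is deepest, every vertex of S sharing a bag with v lies in
   X (top_bag v), so [used] contains every colour forbidden for v. *)
pose used := c @: (X (top_bag v) :\ v).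
have [a a_free] : exists a, a \notin used.
  have used_lt : #|used| < k.
    apply: leq_ltn_trans (leq_imset_card _ _) _.
    by have := X_small (top_bag v); rewrite (cardsD1 v) mem_top_bag add1n.
  have /card_gt0P [a] : 0 < #|~: used| by rewrite cardsCs setCK card_ord subn_gt0.
  by rewrite inE; exists a.
have a_new x i : x \in S -> x != v -> x \in X i -> v \in X i -> a != c x.
  move=> xS xv xi vi; apply: contraNneq a_free => ->.
  by apply: imset_f; rewrite !inE xv (mem_top_bag_of_depth_le xi vi) ?v_max.
exists (fun u => if u == v then a else c u) => u w uS wS i neq_uw ui wi.
have [eq_uv | uv] := eqVneq u v; have [eq_wv | wv] := eqVneq w v.
- by rewrite eq_uv eq_wv eqxx in neq_uw.
- by apply: a_new wS wv wi _; rewrite -eq_uv.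
- by rewrite eq_sym; apply: a_new uS uv ui _; rewrite -eq_wv.
- by apply: c_ok neq_uw ui wi; rewrite !inE ?uv ?wv.
Qed.

Definition bag_colouring k (col : T -> 'I_k) :=
  forall u w i, u != w -> u \in X i -> w \in X i -> col u != col w.

Lemma exists_bag_colouring k : 0 < k -> (forall i, #|X i| <= k) ->
  exists col : T -> 'I_k, bag_colouring col.
Proof.
move=> k_gt0 X_small; have [col col_ok] := exists_bag_colouring_on [set: T] k_gt0 X_small.
by exists col => u w i; apply: col_ok; rewrite inE.
Qed.

Section BoxRepresentation.
Local Open Scope R_scope.
Variables (k : nat) (col : T -> 'I_k).
Hypotheses (e_sym : symmetric e) (col_ok : bag_colouring col)
  (X_edge : forall u v, e u v -> exists i, (u \in X i) && (v \in X i)).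

Definition meets (lu hu lv hv : R) := lu <= hv /\ lv <= hu.

Lemma meets_sym lu hu lv hv : meets lu hu lv hv -> meets lv hv lu hu.
Proof. by case. Qed.

Definition coloured_neighbour v j := [pick a in X (top_bag v) | (col a == j) && e a v].

Lemma coloured_neighbourP v j a : coloured_neighbour v j = Some a ->
  [/\ a \in X (top_bag v), col a = j & e a v].
Proof. by rewrite /coloured_neighbour; case: pickP => // b /and3P [? /eqP ? ?] [<-]. Qed.

Lemma coloured_neighbour_eq v a : a \in X (top_bag v) -> e a v ->
  coloured_neighbour v (col a) = Some a.
Proof.
move=> a_in eav; rewrite /coloured_neighbour.
case: pickP => [b /and3P [b_in same_col _] | none]; last by have := none a; rewrite a_in eqxx eav.
by congr Some; apply/eqP; apply: contraTT same_col => neq_ba; exact: col_ok neq_ba b_in a_in.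
Qed.

Definition colour_lo j v :=
  if col v == j then node_lo (top_bag v)
  else if coloured_neighbour v j is Some a then node_lo (top_bag a)
  else node_mid (top_bag v).

Definition colour_hi j v := if col v == j then node_lo (top_bag v) else node_hi (top_bag v).

Lemma colour_lo_own v : colour_lo (col v) v = node_lo (top_bag v).
Proof. by rewrite /colour_lo eqxx. Qed.

Lemma colour_hi_own v : colour_hi (col v) v = node_lo (top_bag v).
Proof. by rewrite /colour_hi eqxx. Qed.

Lemma colour_hi_other j v : col v != j -> colour_hi j v = node_hi (top_bag v).
Proof. by rewrite /colour_hi => /negbTE ->. Qed.

Lemma colour_lo_le_mid j v : col v != j -> colour_lo j v <= node_mid (top_bag v).
Proof.
move=> /negbTE cv; rewrite /colour_lo cv.
case E: coloured_neighbour => [a|]; last by lra.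
have [a_in _ _] := coloured_neighbourP E.
have [lo_lo _] := node_ancestor_sub (top_bag_ancestor a_in).
by have := node_mid_bounds (top_bag v); lra.
Qed.

Lemma colour_lo_le_hi j v : colour_lo j v <= colour_hi j v.
Proof.
have [<-|cv] := eqVneq (col v) j; first by rewrite colour_lo_own colour_hi_own; lra.
rewrite colour_hi_other //; have := colour_lo_le_mid cv.
by have := node_mid_bounds (top_bag v); lra.
Qed.

Lemma colour_meet_edge_own u v : e u v -> u != v ->
  meets (colour_lo (col u) u) (colour_hi (col u) u) (colour_lo (col u) v) (colour_hi (col u) v).
Proof.
move=> euv neq_uv; have [i /andP [ui vi]] := X_edge euv.
have cv : col v != col u by rewrite eq_sym (col_ok neq_uv ui vi).
rewrite /meets colour_lo_own colour_hi_own colour_hi_other //.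
have := node_lo_lt_hi (top_bag u); have := node_lo_lt_hi (top_bag v).
have [tu_tv|not_tu_tv] := boolP (ancestor (top_bag u) (top_bag v)).
  have u_in : u \in X (top_bag v) by apply: mem_bag_ancestor ui (top_bag_ancestor vi) tu_tv.
  rewrite /colour_lo (negbTE cv) (coloured_neighbour_eq u_in euv).
  by have [? ?] := node_ancestor_sub tu_tv; lra.
have [tv_tu neq_t] := not_ancestor_proper (top_bag_ancestor ui) (top_bag_ancestor vi) not_tu_tv.
have := node_ancestor_sub tv_tu; have := node_mid_le_lo tv_tu neq_t.
by have := colour_lo_le_mid cv; lra.
Qed.

Lemma colour_meet_edge j u v : e u v -> u != v ->
  meets (colour_lo j u) (colour_hi j u) (colour_lo j v) (colour_hi j v).
Proof.
move=> euv neq_uv.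
have [<-|cu] := eqVneq (col u) j; first exact: colour_meet_edge_own.
have [<-|cv] := eqVneq (col v) j.
  by apply: meets_sym; apply: colour_meet_edge_own; rewrite 1?e_sym 1?eq_sym.
have [i /andP [ui vi]] := X_edge euv.
rewrite /meets !colour_hi_other //; have := colour_lo_le_mid cu; have := colour_lo_le_mid cv.
by case/orP: (top_bags_comparable ui vi) => /node_ancestor_mid; lra.
Qed.

Lemma colour_separate_nonedge u v : ~~ e u v -> u != v -> ancestor (top_bag u) (top_bag v) ->
  ~ meets (colour_lo (col u) u) (colour_hi (col u) u) (colour_lo (col u) v) (colour_hi (col u) v).
Proof.
move=> not_euv neq_uv tu_tv; rewrite /meets colour_lo_own colour_hi_own => -[_].
have [lo_tu _] := node_ancestor_sub tu_tv; have := node_mid_bounds (top_bag u).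
have [same_col|cv] := eqVneq (col v) (col u).
  rewrite -same_col colour_lo_own.
  have neq_t : top_bag u != top_bag v.
    apply/eqP => eq_t; have v_in : v \in X (top_bag u) by rewrite eq_t mem_top_bag.
    by have := col_ok neq_uv (mem_top_bag u) v_in; rewrite same_col eqxx.
  by have := node_mid_le_lo tu_tv neq_t; lra.
rewrite /colour_lo (negbTE cv); case E: coloured_neighbour => [a|]; last first.
  by have := node_mid_bounds (top_bag v); lra.
have [a_in ca eav] := coloured_neighbourP E.
have neq_au : a != u by apply: contraNneq not_euv => <-.
have ta_tv := top_bag_ancestor a_in.
have [ta_tu|not_ta_tu] := boolP (ancestor (top_bag a) (top_bag u)).
  have a_in_u := mem_bag_ancestor a_in tu_tv ta_tu.
  by have := col_ok neq_au a_in_u (mem_top_bag u); rewrite ca eqxx.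
have [tu_ta neq_t] := not_ancestor_proper ta_tv tu_tv not_ta_tu.
by have := node_mid_le_lo tu_ta neq_t; lra.
Qed.

Definition box_lo v (i : 'I_k.+1) :=
  if unlift ord0 i is Some j then colour_lo j v else node_lo (top_bag v).

Definition box_hi v (i : 'I_k.+1) :=
  if unlift ord0 i is Some j then colour_hi j v else node_hi (top_bag v).

Lemma box_rep_bag_colouring : box_rep e k.+1.
Proof.
exists box_lo, box_hi; split=> [v i | u v /eqP neq_uv].
  rewrite /box_lo /box_hi; case: (unlift ord0 i) => [j|]; first exact: colour_lo_le_hi.
  exact/Rlt_le/node_lo_lt_hi.
split=> [euv i | meet_all].
  rewrite /box_lo /box_hi; case: (unlift ord0 i) => [j|]; first exact: colour_meet_edge.
  have [i' /andP [ui vi]] := X_edge euv.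
  have := node_lo_lt_hi (top_bag u); have := node_lo_lt_hi (top_bag v).
  by case/orP: (top_bags_comparable ui vi) => /node_ancestor_sub; lra.
apply/idPn => not_euv.
have := meet_all ord0; rewrite /box_lo /box_hi unlift_none => -[meet0 meet0'].
have [tu_tv|tv_tu] : ancestor (top_bag u) (top_bag v) \/ ancestor (top_bag v) (top_bag u).
  apply/orP; apply/idPn; rewrite negb_or => /andP [not_uv not_vu].
  by have := node_incomparable_disjoint not_uv not_vu; lra.
- apply: colour_separate_nonedge not_euv neq_uv tu_tv _.
  by have := meet_all (lift ord0 (col u)); rewrite /box_lo /box_hi liftK.
- apply: (colour_separate_nonedge (u := v) (v := u)) tv_tu _; rewrite 1?e_sym 1?eq_sym //.
  by apply: meets_sym; have := meet_all (lift ord0 (col v)); rewrite /box_lo /box_hi liftK.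
Qed.

End BoxRepresentation.

End TreeDecomposition.

End RootedTree.

Lemma box_rep_tree_decomposition (T I : finType) (e : rel T) (t : rel I) (X : I -> {set T}) :
  symmetric e -> tree_decomposition e t X -> box_rep e (\max_i #|X i|).+1.
Proof.
move=> e_sym [[I_gt0 [t_sym [_ [t_conn _]]]] X_cover X_edge X_path].
have [r _] := card_gt0P I_gt0.
have X_small i : #|X i| <= \max_i #|X i| by apply: leq_bigmax.
have [k0|k_gt0] := posnP (\max_i #|X i|).
  have T_empty (v : T) : False.
    have [i vi] := X_cover v; have := X_small i; rewrite k0 leqn0 cards_eq0 => /eqP Xi0.
    by rewrite Xi0 inE in vi.
  by exists (fun _ _ => R0), (fun _ _ => R0); split=> [v|v]; case: (T_empty v).
have [col col_ok] := exists_bag_colouring t_sym (t_conn r) X_cover X_path k_gt0 X_small.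
exact: (box_rep_bag_colouring t_sym (t_conn r) X_cover X_path e_sym col_ok X_edge).
Qed.

Lemma exists_least_nat (P : nat -> Prop) :
  (exists n, P n) -> exists n, P n /\ forall m, P m -> n <= m.
Proof.
move=> exP; have [n [[Pn n_min] _]] :=
  dec_inh_nat_subset_has_unique_least_element P (fun n => classic (P n)) exP.
by exists n; split=> // m /n_min /leP.
Qed.

Lemma tree_decomposition_single_bag (T : finType) (e : rel T) :
  tree_decomposition e (fun _ _ : unit => false) (fun _ => [set: T]).
Proof.
split=> [|v|u v _|i j k _]; last by apply: subsetT.
- split; first by rewrite card_unit.
  split=> //; split=> //; split=> [[] []|]; first exact: connect0.
  by move=> x [|a p] //=.
- by exists tt; rewrite inE.
- by exists tt; rewrite !inE.
Qed.

Lemma exists_min_width_tree_decomposition (T : finType) (e : rel T) :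
  exists (I : finType) (t : rel I) (X : I -> {set T}), tree_decomposition e t X /\
    forall (I' : finType) (t' : rel I') (X' : I' -> {set T}),
      tree_decomposition e t' X' -> \max_i #|X i| <= \max_i #|X' i|.
Proof.
pose has_td n := exists (I : finType) (t : rel I) (X : I -> {set T}),
  tree_decomposition e t X /\ \max_i #|X i| = n.
have [|n [[I [t [X [td <-]]]] n_min]] := exists_least_nat (P := has_td).
  exists (\max_(i : unit) #|[set: T]|), unit, (fun _ _ => false), (fun _ => [set: T]).
  by split; first exact: tree_decomposition_single_bag.
by exists I, t, X; split=> // I' t' X' td'; apply: n_min; exists I', t', X'.
Qed.

Theorem theorem2 (T : finType) (e : rel T) :
  simple_graph e ->
  exists (bx : nat) (tw : int),
    [/\ is_boxicity e bx, is_treewidth e tw & (Posz bx <= tw + 2)%R].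
Proof.
move=> [e_sym _].
have [I [t [X [td X_min]]]] := exists_min_width_tree_decomposition e.
have box_td := box_rep_tree_decomposition e_sym td.
have [bx [box_bx bx_min]] := exists_least_nat (ex_intro _ _ box_td).
exists bx, (td_width X); split.
- by split.
- split=> [|I' t' X' /X_min]; first by exists I, t, X.
  by rewrite /td_width; lia.
- by have := bx_min _ box_td; rewrite /td_width; lia.
Qed.
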